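(* For all $i=1,\dots,l$ and all $\beta\in Q_+$, \begin{eqnarray*} &&E_i\left(\theta^{(1)}\otimes\theta^{(2)}\right)_\beta=0,\\ &&\bar E_i\left(\bar\theta^{(1)}\otimes\bar\theta^{(2)}\right)_\beta=0. \end{eqnarray*}
   Context: Let $\mathfrak{g}$ be a complex simple Lie algebra with simple roots $\alpha_1,\dots,\alpha_l$, weight lattice $P$, root lattice $Q$, $Q_+=\oplus_i\mathbb{Z}_{\ge0}\alpha_i$, invariant form $(~,~)$, $d_i=(\alpha_i,\alpha_i)/2$, $v_i=v^{d_i}$. $U_v(\mathfrak{g})$ has generators $E_i,F_i,K_\mu$ ($\mu\in P$), $K_i=K_{\alpha_i}$, with coproduct $\Delta E_i=E_i\otimes1+K_i\otimes E_i$, $\Delta K_\mu=K_\mu\otimes K_\mu$; $U_{v^{-1}}(\mathfrak{g})$ has generators $\bar E_i,\bar F_i,\bar K_\mu$ with coproduct $\Delta\bar E_i=\bar E_i\otimes\bar K_i+1\otimes\bar E_i$, $\Delta\bar K_\mu=\bar K_\mu\otimes\bar K_\mu$. $\mathcal V^\lambda$ (resp. $\bar{\mathcal V}^\lambda$) is the Verma module over $U_v(\mathfrak{g})$ (resp. $U_{v^{-1}}(\mathfrak{g})$) with highest weight vector ${\bf 1}^\lambda$ (resp. $\bar{\bf 1}^\lambda$), $K_\mu{\bf 1}^\lambda=v^{(\mu,\lambda)}{\bf 1}^\lambda$, $\bar K_\mu\bar{\bf 1}^\lambda=v^{-(\mu,\lambda)}\bar{\bf 1}^\lambda$, graded by $\beta\in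 Q_+$ (weight $\lambda-\beta$), with completions $\widehat{\mathcal V}^\lambda=\prod_\beta(\mathcal V^\lambda)_\beta$, $\widehat{\bar{\mathcal V}}^\lambda$. Given an orientation of the Dynkin graph, i.e. a skew-symmetric matrix $\epsilon=(\epsilon_{i,j})$, elements $\nu_i\in P$ with $(\nu_i,\alpha_j)-(\nu_j,\alpha_i)=\epsilon_{i,j}(\alpha_i,\alpha_j)$ and nonzero scalars $c_i$, the Whittaker vector $\theta^\lambda(\epsilon,\nu,c)=\sum_{\beta\in Q_+}\theta^\lambda_\beta\in\widehat{\mathcal V}^\lambda$ is the unique element with $\theta^\lambda_0={\bf 1}^\lambda$ and $E_iK_{\nu_i}\theta^\lambda=\frac{c_i}{1-v_i^2}\theta^\lambda$; the dual Whittaker vector $\bar\theta^\lambda(\epsilon,\nu,c)\in\widehat{\bar{\mathcal V}}^\lambda$ has $\bar\theta^\lambda_0=\bar{\bf 1}^\lambda$ and $\bar E_i\bar K_{\nu_i}\bar\theta^\lambda=\frac{c_i^{-1}}{1-v_i^{-2}}\bar\theta^\lambda$. Fix $\lambda_1,\lambda_2\in P$, $\beta\in Q_+$, set $\nu^\pm_i=\nu_i\pm\alpha_i$, and let $\theta^{(1)}=\theta^{\lambda_1}(\epsilon,\nu^-,c^{(1)})$, $\theta^{(2)}=\theta^{\lambda_2}(-\epsilon,-\nu,c^{(2)})$, $\bar\theta^{(1)}=\bar\theta^{\lambda_1}(\epsilon,\nu,\bar c^{(1)})$, $\bar\theta^{(2)}=\bar\theta^{\lambda_2}(-\epsilon,-\nu^+,\bar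 c^{(2)})$, where $\bar c^{(1)}_i=v_i^{-1}c^{(1)}_i$, $\bar c^{(2)}_i=v_i^3c^{(2)}_i$, and $c^{(1)}_i/c^{(2)}_i=-v^{(\nu_i,\lambda_1+\lambda_2-\beta-\alpha_i)+(\alpha_i,\alpha_i)}$. The tensor products carry the action via the coproducts, and $(\cdot)_\beta$ denotes the component of weight $\lambda_1+\lambda_2-\beta$. *)

From HB Require Import structures.
From mathcomp Require Import all_boot all_order all_algebra.
Set Implicit Arguments. Unset Strict Implicit. Unset Printing Implicit Defensive.
Import Order.TTheory GRing.Theory Num.Theory.
Local Open Scope ring_scope.

(* Elements of Q_+ : beta = sum_i beta_i alpha_i, recorded by coefficients. *)
Definition Qp (l : nat) := {ffun 'I_l -> nat}.

Definition eQ (l : nat) (i : 'I_l) : Qp l := [ffun j => nat_of_bool (i == j)].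

Definition wt (P : zmodType) (l : nat) (alpha : 'I_l -> P) (g : Qp l) : P :=
  \sum_(j < l) alpha j *+ g j.

(* v^x for a rational exponent x is vp x; v_i = v^{(alpha_i,alpha_i)/2} *)
Definition vi (K : fieldType) (P : zmodType) (l : nat) (form : P -> P -> rat)
  (vp : rat -> K) (alpha : 'I_l -> P) (i : 'I_l) : K :=
  vp (form (alpha i) (alpha i) / 2%:R).

(* A Q_+-graded module of highest weight lam over U_v(g) (only the data used
   by the statement): the weight space of weight lam - gamma is K^(n gamma)
   (row vectors), K_mu acts on it by v^{(mu, lam - gamma)}, and E_i maps the
   weight space of index gamma + alpha_i to that of index gamma, by right
   multiplication with the matrix E i gamma.  An element theta of the
   completion is a family of components theta gamma.

   Whittaker condition  E_i K_{nu_i} theta = c_i/(1 - v_i^2) theta,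
   written component by component. *)
Definition whittaker (K : fieldType) (P : zmodType) (l : nat)
  (form : P -> P -> rat) (vp : rat -> K) (alpha : 'I_l -> P) (lam : P)
  (n : Qp l -> nat) (E : forall (i : 'I_l) (g : Qp l), 'M[K]_(n (g + eQ i), n g))
  (nu : 'I_l -> P) (c : 'I_l -> K) (th : forall g : Qp l, 'rV[K]_(n g)) : Prop :=
  forall (i : 'I_l) (g : Qp l),
    vp (form (nu i) (lam - wt alpha (g + eQ i))) *: (th (g + eQ i) *m E i g)
      = (c i / (1 - vi form vp alpha i ^+ 2)) *: th g.

(* The same for a module over U_{v^{-1}}(g): barK_mu acts on the weight space
   of index gamma by v^{-(mu, lam - gamma)}; dual Whittaker condition
   barE_i barK_{nu_i} theta = c_i^{-1}/(1 - v_i^{-2}) theta. *)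
Definition bar_whittaker (K : fieldType) (P : zmodType) (l : nat)
  (form : P -> P -> rat) (vp : rat -> K) (alpha : 'I_l -> P) (lam : P)
  (n : Qp l -> nat) (E : forall (i : 'I_l) (g : Qp l), 'M[K]_(n (g + eQ i), n g))
  (nu : 'I_l -> P) (c : 'I_l -> K) (th : forall g : Qp l, 'rV[K]_(n g)) : Prop :=
  forall (i : 'I_l) (g : Qp l),
    vp (- form (nu i) (lam - wt alpha (g + eQ i))) *: (th (g + eQ i) *m E i g)
      = ((c i)^-1 / (1 - vi form vp alpha i ^- 2)) *: th g.

(* The tensor product of the weight spaces K^m and K^p is K^(m x p), with
   x (x) y represented by the outer product x^T *m y. *)
Definition tens (K : fieldType) (m p : nat) (x : 'rV[K]_m) (y : 'rV[K]_p)
  : 'M[K]_(m, p) := x^T *m y.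

From HB Require Import structures.
From mathcomp Require Import all_boot all_order all_algebra.
From mathcomp Require Import ring.
Set Implicit Arguments.
Unset Strict Implicit.
Unset Printing Implicit Defensive.
Import Order.TTheory GRing.Theory Num.Theory.
Local Open Scope ring_scope.

(* Each Whittaker condition expresses theta_(gamma + alpha_i) E_i as a scalar
   multiple of theta_gamma.  Hence every component of E_i applied to the tensor
   product is a multiple of theta1_gamma (x) theta2_delta whose coefficient is a
   sum of two powers of v with exponents bilinear in the weights, and the
   normalisation of c1/c2 is exactly what makes them cancel. *)

Section BilinearForm.

Variables (P : zmodType) (form : P -> P -> rat).
Hypothesis formDl : forall x y z, form (x + y) z = form x z + form y z.
Hypothesis form_sym : forall x y, form x y = form y x.

Lemma formNl x y : form (- x) y = - form x y.
Proof.
have form0l : form 0 y = 0.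
  by apply: (addrI (form 0 y)); rewrite -formDl !addr0.
by apply/eqP; rewrite -addr_eq0 -formDl addNr form0l.
Qed.

Lemma formDr x y z : form x (y + z) = form x y + form x z.
Proof. by rewrite form_sym formDl !(form_sym x). Qed.

Lemma formNr x y : form x (- y) = - form x y.
Proof. by rewrite form_sym formNl form_sym. Qed.

Lemma whittaker_exponent (nu a lam1 lam2 w u : P) :
  - form (nu - a) (lam1 - (w + a))
    + (form nu (lam1 + lam2 - (w + u + a) - a) + form a a)
  = form a (lam1 - w) + - form (- nu) (lam2 - (u + a)).
Proof. by rewrite !(formDl, formNl, formDr, formNr); ring. Qed.

(* The two extra (a, a) come from the factors v_i^-1 and v_i^3 in the
   constants of the dual Whittaker vectors, since v_i^2 = v^(a, a). *)
Lemma bar_whittaker_exponent (nu a lam1 lam2 w u : P) :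
  form (- (nu + a)) (lam2 - (u + a))
  = form nu (lam1 - (w + a)) + - form a (lam2 - u)
    + - (form nu (lam1 + lam2 - (w + u + a) - a) + form a a) + form a a + form a a.
Proof. by rewrite !(formDl, formNl, formDr, formNr); ring. Qed.

End BilinearForm.

Section Exponential.

Variables (K : fieldType) (vp : rat -> K).
Hypothesis vp_add : forall a b, vp (a + b) = vp a * vp b.
Hypothesis vp0 : vp 0 = 1.

Lemma vp_neq0 a : vp a != 0.
Proof.
apply/eqP => va0; have := vp_add a (- a).
by rewrite subrr vp0 va0 mul0r => /eqP; rewrite oner_eq0.
Qed.

Lemma vp_half_sqr a : vp (a / 2%:R) ^+ 2 = vp a.
Proof. by rewrite expr2 -vp_add; congr vp; field. Qed.

Lemma vpN a : vp (- a) = (vp a)^-1.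
Proof. by apply: (mulfI (vp_neq0 a)); rewrite -vp_add subrr vp0 divff ?vp_neq0. Qed.

End Exponential.

Lemma wtD (P : zmodType) l (alpha : 'I_l -> P) (g d : Qp l) :
  wt alpha (g + d) = wt alpha g + wt alpha d.
Proof. by rewrite /wt -big_split; apply: eq_bigr => j _; rewrite ffunE mulrnDr. Qed.

Lemma wt_eQ (P : zmodType) l (alpha : 'I_l -> P) (i : 'I_l) :
  wt alpha (eQ i) = alpha i.
Proof.
rewrite /wt (bigD1 i) //= big1 ?addr0; first by rewrite ffunE eqxx.
by move=> j /negbTE; rewrite ffunE eq_sym => ->.
Qed.

Lemma tensZl (K : fieldType) m p (k : K) (x : 'rV[K]_m) (y : 'rV[K]_p) :
  tens (k *: x) y = k *: tens x y.
Proof. by rewrite /tens linearZ /= scalemxAl. Qed.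

Lemma tensZr (K : fieldType) m p (k : K) (x : 'rV[K]_m) (y : 'rV[K]_p) :
  tens x (k *: y) = k *: tens x y.
Proof. by rewrite /tens scalemxAr. Qed.

Section WhittakerVectors.

Variables (K : fieldType) (P : zmodType) (l : nat).
Variables (form : P -> P -> rat) (vp : rat -> K) (alpha : 'I_l -> P).
Hypothesis vp_add : forall a b, vp (a + b) = vp a * vp b.
Hypothesis vp0 : vp 0 = 1.
Variables (lam : P) (n : Qp l -> nat).
Variable E : forall (i : 'I_l) (g : Qp l), 'M[K]_(n (g + eQ i), n g).
Variables (nu : 'I_l -> P) (c : 'I_l -> K) (th : forall g : Qp l, 'rV[K]_(n g)).

Lemma whittakerE : whittaker form vp alpha lam E nu c th ->
  forall i g, th (g + eQ i) *m E i g
    = (vp (- form (nu i) (lam - (wt alpha g + alpha i)))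
       * (c i / (1 - vi form vp alpha i ^+ 2))) *: th g.
Proof.
move=> Hth i g; rewrite -(wt_eQ alpha i) -wtD vpN // -scalerA -Hth.
by rewrite scalerA mulVf ?vp_neq0 // scale1r.
Qed.

Lemma bar_whittakerE : bar_whittaker form vp alpha lam E nu c th ->
  forall i g, th (g + eQ i) *m E i g
    = (vp (form (nu i) (lam - (wt alpha g + alpha i)))
       * ((c i)^-1 / (1 - vi form vp alpha i ^- 2))) *: th g.
Proof.
move=> Hth i g; rewrite -(wt_eQ alpha i) -wtD -[form _ _]opprK vpN //.
by rewrite -scalerA -Hth scalerA mulVf ?vp_neq0 // scale1r.
Qed.

End WhittakerVectors.

Section WhittakerTensorProduct.

Variables (K : fieldType) (P : zmodType) (l : nat).
Variables (form : P -> P -> rat) (vp : rat -> K) (alpha : 'I_l -> P).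
Hypothesis formDl : forall x y z, form (x + y) z = form x z + form y z.
Hypothesis form_sym : forall x y, form x y = form y x.
Hypothesis vp_add : forall a b, vp (a + b) = vp a * vp b.
Hypothesis vp0 : vp 0 = 1.
Variables (nu : 'I_l -> P) (lam1 lam2 : P) (c1 c2 : 'I_l -> K).
Variables (i : 'I_l) (g d : Qp l).
Hypothesis c2_neq0 : c2 i != 0.
Hypothesis c1E : c1 i = - vp (form (nu i) (lam1 + lam2 - wt alpha (g + d + eQ i) - alpha i)
                             + form (alpha i) (alpha i)) * c2 i.

Lemma E_tens_whittaker_eq0 (n1 n2 : Qp l -> nat)
  (E1 : forall k h, 'M[K]_(n1 (h + eQ k), n1 h))
  (E2 : forall k h, 'M[K]_(n2 (h + eQ k), n2 h))
  (th1 : forall h, 'rV[K]_(n1 h)) (th2 : forall h, 'rV[K]_(n2 h)) :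
  whittaker form vp alpha lam1 E1 (fun k => nu k - alpha k) c1 th1 ->
  whittaker form vp alpha lam2 E2 (fun k => - nu k) c2 th2 ->
  tens (th1 (g + eQ i) *m E1 i g) (th2 d)
  + vp (form (alpha i) (lam1 - wt alpha g)) *: tens (th1 g) (th2 (d + eQ i) *m E2 i d)
  = 0.
Proof.
move=> Hth1 Hth2.
rewrite (whittakerE vp_add vp0 Hth1) (whittakerE vp_add vp0 Hth2).
rewrite tensZl tensZr scalerA -scalerDl c1E !wtD wt_eQ.
have := whittaker_exponent formDl form_sym (nu i) (alpha i) lam1 lam2 (wt alpha g) (wt alpha d).
move=> /(congr1 vp); rewrite !vp_add => vp_exponent.
by rewrite !mulrA mulrN vp_exponent !mulNr addNr scale0r.
Qed.

Lemma barE_tens_whittaker_eq0 (m1 m2 : Qp l -> nat)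
  (Eb1 : forall k h, 'M[K]_(m1 (h + eQ k), m1 h))
  (Eb2 : forall k h, 'M[K]_(m2 (h + eQ k), m2 h))
  (thb1 : forall h, 'rV[K]_(m1 h)) (thb2 : forall h, 'rV[K]_(m2 h)) :
  bar_whittaker form vp alpha lam1 Eb1 nu
    (fun k => (vi form vp alpha k)^-1 * c1 k) thb1 ->
  bar_whittaker form vp alpha lam2 Eb2 (fun k => - (nu k + alpha k))
    (fun k => vi form vp alpha k ^+ 3 * c2 k) thb2 ->
  tens (thb1 (g + eQ i) *m Eb1 i g) (vp (- form (alpha i) (lam2 - wt alpha d)) *: thb2 d)
  + tens (thb1 g) (thb2 (d + eQ i) *m Eb2 i d)
  = 0.
Proof.
move=> Hthb1 Hthb2.
rewrite (bar_whittakerE vp_add vp0 Hthb1) (bar_whittakerE vp_add vp0 Hthb2).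
rewrite !tensZl !tensZr !scalerA -scalerDl c1E !wtD wt_eQ.
have := bar_whittaker_exponent formDl form_sym (nu i) (alpha i) lam1 lam2 (wt alpha g) (wt alpha d).
move=> /(congr1 vp); rewrite !vp_add => ->.
set q := (1 - _)^-1; rewrite !vpN // !vp_add -(vp_half_sqr vp_add (form (alpha i) (alpha i))) /vi.
rewrite [X in X *: _](_ : _ = 0) ?scale0r //.
have vp_nz := vp_neq0 vp_add vp0.
by field; rewrite c2_neq0 oppr_eq0 mulf_neq0 ?expf_neq0 ?vp_nz.
Qed.

End WhittakerTensorProduct.

Theorem lemma4p2
  (K : fieldType) (P : zmodType) (l : nat)
  (form : P -> P -> rat) (vp : rat -> K) (alpha : 'I_l -> P)
  (form_addl : forall x y z, form (x + y) z = form x z + form y z)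
  (form_sym : forall x y, form x y = form y x)
  (vp_add : forall a b, vp (a + b) = vp a * vp b)
  (vp0 : vp 0 = 1)
  (vp_generic : forall a, vp a = 1 -> a = 0)
  (eps : 'I_l -> 'I_l -> int)
  (eps_skew : forall i j, eps i j = - eps j i)
  (eps_orient : forall i j, i != j -> form (alpha i) (alpha j) != 0 ->
      eps i j = 1 \/ eps i j = -1)
  (eps_zero : forall i j, (i == j) || (form (alpha i) (alpha j) == 0) -> eps i j = 0)
  (nu : 'I_l -> P)
  (nu_eps : forall i j, form (nu i) (alpha j) - form (nu j) (alpha i)
      = (eps i j)%:~R * form (alpha i) (alpha j))
  (lam1 lam2 : P) (beta : Qp l)
  (c1 c2 : 'I_l -> K) (c1_nz : forall i, c1 i != 0) (c2_nz : forall i, c2 i != 0)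
  (c_rel : forall i, c1 i / c2 i =
      - vp (form (nu i) (lam1 + lam2 - wt alpha beta - alpha i)
            + form (alpha i) (alpha i)))
  (n1 n2 : Qp l -> nat)
  (E1 : forall (i : 'I_l) (g : Qp l), 'M[K]_(n1 (g + eQ i), n1 g))
  (E2 : forall (i : 'I_l) (g : Qp l), 'M[K]_(n2 (g + eQ i), n2 g))
  (th1 : forall g : Qp l, 'rV[K]_(n1 g)) (th2 : forall g : Qp l, 'rV[K]_(n2 g))
  (Hth1 : whittaker form vp alpha lam1 E1 (fun i => nu i - alpha i) c1 th1)
  (Hth2 : whittaker form vp alpha lam2 E2 (fun i => - nu i) c2 th2)
  (m1 m2 : Qp l -> nat)
  (Eb1 : forall (i : 'I_l) (g : Qp l), 'M[K]_(m1 (g + eQ i), m1 g))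
  (Eb2 : forall (i : 'I_l) (g : Qp l), 'M[K]_(m2 (g + eQ i), m2 g))
  (thb1 : forall g : Qp l, 'rV[K]_(m1 g)) (thb2 : forall g : Qp l, 'rV[K]_(m2 g))
  (Hthb1 : bar_whittaker form vp alpha lam1 Eb1 nu
             (fun i => (vi form vp alpha i)^-1 * c1 i) thb1)
  (Hthb2 : bar_whittaker form vp alpha lam2 Eb2 (fun i => - (nu i + alpha i))
             (fun i => vi form vp alpha i ^+ 3 * c2 i) thb2) :
  forall i : 'I_l,
    (* E_i (theta1 (x) theta2)_beta = 0, with Delta E_i = E_i (x) 1 + K_i (x) E_i:
       its component in V1_gamma (x) V2_delta, gamma + delta + alpha_i = beta *)
    (forall g d : Qp l, g + d + eQ i = beta ->
       tens (th1 (g + eQ i) *m E1 i g) (th2 d)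
       + vp (form (alpha i) (lam1 - wt alpha g)) *: tens (th1 g) (th2 (d + eQ i) *m E2 i d)
       = 0)
    /\
    (* barE_i (bartheta1 (x) bartheta2)_beta = 0, with
       Delta barE_i = barE_i (x) barK_i + 1 (x) barE_i *)
    (forall g d : Qp l, g + d + eQ i = beta ->
       tens (thb1 (g + eQ i) *m Eb1 i g) (vp (- form (alpha i) (lam2 - wt alpha d)) *: thb2 d)
       + tens (thb1 g) (thb2 (d + eQ i) *m Eb2 i d)
       = 0).
Proof.
move=> i; split=> g d def_beta.
all: have := c_rel i; rewrite -def_beta => /(canRL (divfK (c2_nz i))) c1E.
- exact: (E_tens_whittaker_eq0 form_addl form_sym vp_add vp0 c1E).
- exact: (barE_tens_whittaker_eq0 form_addl form_sym vp_add vp0 (c2_nz i) c1E).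
Qed.
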